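(* Let $k$ be a field of characteristic $\neq 2$, and let $\mathfrak g_\boxtimes$, $\Omega,\Omega',\Omega''$, $\mathfrak g$, $\Psi$, $u_0,u_1,u_2$ be as in the context. Then (i) $\Psi(\Omega)=u_0(t-1)k[t]\oplus u_1k[t]\oplus u_2tk[t]$; (ii) $\Psi(\Omega')=u_0t'k[t']\oplus u_1(t'-1)k[t']\oplus u_2k[t']$; (iii) $\Psi(\Omega'')=u_0k[t'']\oplus u_1t''k[t'']\oplus u_2(t''-1)k[t'']$. In particular, $\mathfrak g$ is the direct sum of the subalgebras $\Psi(\Omega)$, $\Psi(\Omega')$, $\Psi(\Omega'')$.
   Context: $\mathcal A=k[t,t^{-1},(1-t)^{-1}]\subset k(t)$, $t'=1-t^{-1}$, $t''=(1-t)^{-1}$, $\mathfrak g=\mathfrak{sl}_2(k)\otimes_k\mathcal A$ (an $\mathcal A$-module via the second factor; $k[s]$ for $s\in\mathcal A$ denotes the $k$-subalgebra of $\mathcal A$ generated by $s$). The Tetrahedron algebra $\mathfrak g_\boxtimes$ is the Lie algebra over $k$ with generators $X_{ij}$ ($i,j\in\{0,1,2,3\}$, $i\neq j$) and relations $X_{ij}+X_{ji}=0$ for $i\neq j$; $[X_{ij},X_{jk}]=2(X_{ij}+X_{jk})$ for mutually distinct $i,j,k$; $[X_{hi},[X_{hi},[X_{hi},X_{jk}]]]=4[X_{hi},X_{jk}]$ for mutually distinct $h,i,j,k$. $\Omega$ (resp. $\Omega'$, $\Omega''$) is the subalgebra of $\mathfrak g_\boxtimes$ generated by $X_{12},X_{03}$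 (resp. $X_{23},X_{01}$; $X_{31},X_{02}$). With $x=\begin{pmatrix}-1&2\\0&1\end{pmatrix}$, $y=\begin{pmatrix}-1&0\\-2&1\end{pmatrix}$, $z=\begin{pmatrix}1&0\\0&-1\end{pmatrix}$, $\Psi:\mathfrak g_\boxtimes\to\mathfrak g$ is the Lie algebra homomorphism determined by $\Psi(X_{12})=x\otimes1$, $\Psi(X_{23})=y\otimes 1$, $\Psi(X_{31})=z\otimes 1$, $\Psi(X_{03})=y\otimes t+z\otimes(t-1)$, $\Psi(X_{01})=z\otimes t'+x\otimes(t'-1)$, $\Psi(X_{02})=x\otimes t''+y\otimes(t''-1)$. Finally $u_0=\tfrac14(z\otimes 1+x\otimes t''+y\otimes(t''-1))$, $u_1=\tfrac14(x\otimes 1+y\otimes t+z\otimes(t-1))$, $u_2=\tfrac14(y\otimes 1+z\otimes t'+x\otimes(t'-1))$. *)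

From HB Require Import structures.
From mathcomp Require Import all_boot all_order all_algebra.
Set Implicit Arguments. Unset Strict Implicit. Unset Printing Implicit Defensive.
Import Order.TTheory GRing.Theory Num.Theory.
Local Open Scope ring_scope.

Definition lie_gen (K : pzRingType) (V : lmodType K) (br : V -> V -> V)
  (S : V -> Prop) (v : V) : Prop :=
  forall P : V -> Prop,
    (forall w, S w -> P w) -> P 0 ->
    (forall (a : K) u w, P u -> P w -> P (a *: u + w)) ->
    (forall u w, P u -> P w -> P (br u w)) -> P v.

Definition is_lie_bracket (K : pzRingType) (V : lmodType K) (br : V -> V -> V) : Prop :=
  [/\ forall (a : K) u v w, br (a *: u + v) w = a *: br u w + br v w,
      forall (a : K) u v w, br w (a *: u + v) = a *: br w u + br w v,
      forall u, br u u = 0 &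
      forall u v w, br u (br v w) + br v (br w u) + br w (br u v) = 0].

Definition i0 : 'I_4 := @Ordinal 4 0 isT.
Definition i1 : 'I_4 := @Ordinal 4 1 isT.
Definition i2 : 'I_4 := @Ordinal 4 2 isT.
Definition i3 : 'I_4 := @Ordinal 4 3 isT.

Definition tetra_relations (K : pzRingType) (V : lmodType K) (br : V -> V -> V)
  (X : 'I_4 -> 'I_4 -> V) : Prop :=
  [/\ forall i j, i != j -> X i j + X j i = 0,
      forall i j l, i != j -> j != l -> i != l ->
        br (X i j) (X j l) = 2%:R *: (X i j + X j l) &
      forall h i j l, uniq [:: h; i; j; l] ->
        br (X h i) (br (X h i) (br (X h i) (X j l))) = 4%:R *: br (X h i) (X j l)].

Section Loop.
Variable k : fieldType.

Definition kt := {fraction {poly k}}.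
Definition kF (c : k) : kt := tofrac (c%:P).
Definition tt : kt := tofrac 'X.
Definition tt' : kt := 1 - tt^-1.
Definition tt'' : kt := (1 - tt)^-1.

(* A = k[t, t^-1, (1-t)^-1] as a subset of k(t) *)
Definition inA (f : kt) : Prop :=
  exists (p : {poly k}) (a b : nat), f = tofrac p / (tt ^+ a * (1 - tt) ^+ b).

Definition ev (p : {poly k}) (s : kt) : kt := (map_poly kF p).[s].

(* sl2(k) (x)_k A is identified with the traceless 2x2 matrices with entries in A,
   x (x) f corresponding to f *: x. *)
Definition inG (M : 'M[kt]_2) : Prop := \tr M = 0 /\ forall i j, inA (M i j).

Definition mx2 (a b c d : kt) : 'M[kt]_2 :=
  \matrix_(i < 2, j < 2)
    (if (i : nat) == 0%N then (if (j : nat) == 0%N then a else b)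
     else (if (j : nat) == 0%N then c else d)).

Definition xm : 'M[kt]_2 := mx2 (-1) 2%:R 0 1.
Definition ym : 'M[kt]_2 := mx2 (-1) 0 (- 2%:R) 1.
Definition zm : 'M[kt]_2 := mx2 1 0 0 (-1).

Definition u0 : 'M[kt]_2 := (4%:R)^-1 *: (zm + tt'' *: xm + (tt'' - 1) *: ym).
Definition u1 : 'M[kt]_2 := (4%:R)^-1 *: (xm + tt *: ym + (tt - 1) *: zm).
Definition u2 : 'M[kt]_2 := (4%:R)^-1 *: (ym + tt' *: zm + (tt' - 1) *: xm).

Definition lie_br (M N : 'M[kt]_2) : 'M[kt]_2 := M *m N - N *m M.

Definition sum3 (f0 f1 f2 s : kt) (M : 'M[kt]_2) : Prop :=
  exists p q r : {poly k},
    M = (f0 * ev p s) *: u0 + (f1 * ev q s) *: u1 + (f2 * ev r s) *: u2.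

Definition direct3 (f0 f1 f2 s : kt) : Prop :=
  forall p q r : {poly k},
    (f0 * ev p s) *: u0 + (f1 * ev q s) *: u1 + (f2 * ev r s) *: u2 = 0 ->
    [/\ (f0 * ev p s) *: u0 = 0, (f1 * ev q s) *: u1 = 0 & (f2 * ev r s) *: u2 = 0].

Definition is_direct_sum3 (S : 'M[kt]_2 -> Prop) (f0 f1 f2 s : kt) : Prop :=
  (forall M, S M <-> sum3 f0 f1 f2 s M) /\ direct3 f0 f1 f2 s.

Definition g_direct_sum (S1 S2 S3 : 'M[kt]_2 -> Prop) : Prop :=
  (forall M, inG M <-> exists a b c, [/\ S1 a, S2 b, S3 c & M = a + b + c]) /\
  (forall a b c, S1 a -> S2 b -> S3 c -> a + b + c = 0 -> [/\ a = 0, b = 0 & c = 0]).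

End Loop.

(* In the basis u0, u1, u2 of sl2 (x) k(t) the bracket is
   [u0, u1] = -t u2, [u1, u2] = -t' u0, [u2, u0] = -t'' u1.
   The generators of Omega map to 2 u1 -+ 2t u2, and bracketing with u1 and t u2 multiplies
   coordinates by t, so Psi(Omega) is (t - 1)k[t] u0 + k[t] u1 + t k[t] u2; Omega' and Omega''
   are the rotations u0 -> u1 -> u2, t -> t' -> t''. Coordinatewise, the decomposition of g is
   the partial fraction decomposition A = k[t] + k[t'] + k[t''] (poles at infinity, 0 and 1),
   whose summands meet only in the constants; in each coordinate the factors s or s - 1 remove
   the constants from two of the three summands. *)

From Pilot Require Import Defs.
From HB Require Import structures.
From mathcomp Require Import all_boot all_order all_algebra.
From mathcomp Require Import ring zify.
Import GRing.Theory.
Local Open Scope ring_scope.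
Set Implicit Arguments. Unset Strict Implicit. Unset Printing Implicit Defensive.

(* Everything up to the last section is stated over an arbitrary field F and, from
   [PartialFractions] on, an element t transcendental over k, restating the definitions of Defs
   there: [ring] and [field] are impractically slow on [kt k], and the specialisation F := kt k,
   t := tt k is convertible to the original definitions. *)
Section Evaluation.
Variables (k F : fieldType) (phi : {rmorphism k -> F}).
Implicit Types (s : F) (c e : k) (p q P Q R : {poly k}).

Definition evF p s := (map_poly phi p).[s].

Lemma evFD p q s : evF (p + q) s = evF p s + evF q s.
Proof. by rewrite /evF rmorphD hornerD. Qed.
Lemma evFN p s : evF (- p) s = - evF p s.
Proof. by rewrite /evF rmorphN hornerN. Qed.
Lemma evFB p q s : evF (p - q) s = evF p s - evF q s.
Proof. by rewrite evFD evFN. Qed.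
Lemma evFM p q s : evF (p * q) s = evF p s * evF q s.
Proof. by rewrite /evF rmorphM hornerM. Qed.
Lemma evFC c s : evF c%:P s = phi c.
Proof. by rewrite /evF map_polyC hornerC. Qed.
Lemma evFX s : evF 'X s = s.
Proof. by rewrite /evF map_polyX hornerX. Qed.
Lemma evF0 s : evF 0 s = 0.
Proof. by rewrite -[0]/(0%:P : {poly k}) evFC rmorph0. Qed.
Lemma evF1 s : evF 1 s = 1.
Proof. by rewrite -[1]/(1%:P : {poly k}) evFC rmorph1. Qed.
Lemma evF_exp p n s : evF (p ^+ n) s = evF p s ^+ n.
Proof. by rewrite /evF rmorphXn horner_exp. Qed.

Lemma evFZ c p s : evF (c *: p) s = phi c * evF p s.
Proof. by rewrite -mul_polyC evFM evFC. Qed.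

Definition evFE := (evFD, evFB, evFN, evFM, evFC, evFX, evF0, evF1, evF_exp, rmorph0, rmorph1).

Lemma evF_eq0 s p : ~ algebraicOver phi s -> evF p s = 0 -> p = 0.
Proof.
move=> tr_s ps0; apply/eqP; apply: contraT => p_nz.
by case: tr_s; exists p => //; apply/rootP.
Qed.

Lemma evF_divXsubC s c p :
  evF p s = (s - phi c) * evF (p %/ ('X - c%:P)) s + phi p.[c].
Proof. by rewrite {1}(divp_eq p ('X - c%:P)) modp_XsubC !evFE mulrC. Qed.

Lemma evF_mulXsubC_const s e c p : ~ algebraicOver phi s ->
  (s - phi e) * evF p s = phi c -> c = 0.
Proof.
move=> tr_s E; have : ('X - e%:P) * p - c%:P = 0.
  by apply: (evF_eq0 tr_s); rewrite !evFE E subrr.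
move/(congr1 (horner^~ e)); rewrite !hornerE subrr mul0r add0r.
by move/eqP; rewrite oppr_eq0 => /eqP.
Qed.

Lemma evF_sum_shift s0 s1 s2 e0 e1 P Q R : exists P' Q' R',
  evF P s0 + evF Q s1 + evF R s2 =
  (s0 - phi e0) * evF P' s0 + (s1 - phi e1) * evF Q' s1 + evF R' s2.
Proof.
exists (P %/ ('X - e0%:P)), (Q %/ ('X - e1%:P)), (R + (P.[e0] + Q.[e1])%:P).
by rewrite {1}(evF_divXsubC s0 e0 P) {1}(evF_divXsubC s1 e1 Q) !evFE rmorphD; ring.
Qed.

Lemma evF_sum_shift_eq0 s0 s1 s2 e0 e1 :
  ~ algebraicOver phi s0 -> ~ algebraicOver phi s1 ->
  (forall P Q R, evF P s0 + evF Q s1 + evF R s2 = 0 ->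
     (exists c, evF P s0 = phi c) /\ (exists c, evF Q s1 = phi c)) ->
  forall P Q R,
  (s0 - phi e0) * evF P s0 + (s1 - phi e1) * evF Q s1 + evF R s2 = 0 ->
  [/\ (s0 - phi e0) * evF P s0 = 0, (s1 - phi e1) * evF Q s1 = 0 & evF R s2 = 0].
Proof.
move=> tr0 tr1 rigid P Q R sum0.
have [[c0 E0] [c1 E1]] : (exists c, evF (('X - e0%:P) * P) s0 = phi c) /\
                         (exists c, evF (('X - e1%:P) * Q) s1 = phi c).
  by apply: (rigid _ _ R); rewrite !evFE.
rewrite !evFE in E0 E1.
have Z0 : (s0 - phi e0) * evF P s0 = 0.
  by rewrite E0 (evF_mulXsubC_const tr0 E0) rmorph0.
have Z1 : (s1 - phi e1) * evF Q s1 = 0.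
  by rewrite E1 (evF_mulXsubC_const tr1 E1) rmorph0.
by split => //; rewrite -sum0 Z0 Z1 !add0r.
Qed.

End Evaluation.

Section PartialFractions.
Variables (k F : fieldType) (phi : {rmorphism k -> F}) (t : F).
Hypothesis tr_t : ~ algebraicOver phi t.
Local Notation ev := (evF phi).
Local Notation t' := (1 - t^-1).
Local Notation t'' := ((1 - t)^-1).
Implicit Types (f g s : F) (p q P Q R : {poly k}).

Lemma t'_transcendental : ~ algebraicOver phi t'.
Proof.
move=> /(algebraic_sub (algebraic1 phi)) /algebraic_inv.
by rewrite opprB addrC subrK invrK.
Qed.

Lemma t''_transcendental : ~ algebraicOver phi t''.
Proof.
move=> /algebraic_inv; rewrite invrK => /(algebraic_sub (algebraic1 phi)).
by rewrite opprB addrC subrK.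
Qed.

Lemma t_neq0 : t != 0.
Proof. by apply: contra_notN tr_t => /eqP ->; apply: algebraic0. Qed.

Lemma subr1t_neq0 : 1 - t != 0.
Proof. by apply: contra_notN tr_t; rewrite subr_eq0 => /eqP <-; apply: algebraic1. Qed.

Definition inAF f := exists p a b, f = ev p t / (t ^+ a * (1 - t) ^+ b).

Lemma inAF_add f g : inAF f -> inAF g -> inAF (f + g).
Proof.
move=> [p [a [b ->]]] [q [c [d ->]]].
exists (p * 'X^c * (1 - 'X) ^+ d + q * 'X^a * (1 - 'X) ^+ b), (a + c)%N, (b + d)%N.
rewrite !evFE !exprD.
have := expf_neq0 a t_neq0; have := expf_neq0 c t_neq0.
have := expf_neq0 b subr1t_neq0; have := expf_neq0 d subr1t_neq0.
move: (t ^+ a) (t ^+ c) ((1 - t) ^+ b) ((1 - t) ^+ d) => A C B D nD nB nC nA.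
by field; rewrite nA nB nC nD.
Qed.

Lemma inAF_mul f g : inAF f -> inAF g -> inAF (f * g).
Proof.
move=> [p [a [b ->]]] [q [c [d ->]]]; exists (p * q), (a + c)%N, (b + d)%N.
rewrite evFM !exprD.
have := expf_neq0 a t_neq0; have := expf_neq0 c t_neq0.
have := expf_neq0 b subr1t_neq0; have := expf_neq0 d subr1t_neq0.
move: (t ^+ a) (t ^+ c) ((1 - t) ^+ b) ((1 - t) ^+ d) => A C B D nD nB nC nA.
by field; rewrite nA nB nC nD.
Qed.

Lemma inAF_ev p : inAF (ev p t).
Proof. by exists p, 0%N, 0%N; rewrite !expr0 mulr1 divr1. Qed.

Lemma inAF_phi c : inAF (phi c).
Proof. by rewrite -(evFC phi c t); apply: inAF_ev. Qed.

Lemma inAF_opp f : inAF f -> inAF (- f).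
Proof. by move=> Af; rewrite -mulN1r -(rmorphN1 phi); apply: inAF_mul (inAF_phi _) Af. Qed.

Lemma inAF_tV : inAF t^-1.
Proof. by exists 1, 1%N, 0%N; rewrite evF1 expr1 expr0 mulr1 mul1r. Qed.

Lemma inAF_t'' : inAF t''.
Proof. by exists 1, 0%N, 1%N; rewrite evF1 expr1 expr0 !mul1r. Qed.

Lemma inAF_t' : inAF t'.
Proof. by rewrite -(rmorph1 phi); apply: inAF_add (inAF_phi 1) (inAF_opp inAF_tV). Qed.

Lemma inAF_evF p s : inAF s -> inAF (ev p s).
Proof.
move=> As; elim/poly_ind: p => [|p c IH]; first by rewrite evF0 -(rmorph0 phi); apply: inAF_phi.
by rewrite !evFE; apply: inAF_add (inAF_mul IH As) (inAF_phi c).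
Qed.

Definition pf_sum f := exists P Q R, f = ev P t + ev Q t' + ev R t''.

(* [1/t = 1 - t'] and [(t'' - 1)/t = t''] *)
Lemma pf_sum_divt f : pf_sum f -> pf_sum (f / t).
Proof.
move=> [P [Q [R ->]]].
exists (P %/ ('X - 0%:P)), ((1 - 'X) * (Q + (P.[0] + R.[1])%:P)), ('X * (R %/ ('X - 1%:P))).
rewrite {1}(evF_divXsubC phi t 0 P) {1}(evF_divXsubC phi t'' 1 R) !evFE rmorphD.
by have t0 := t_neq0; have t1 := subr1t_neq0; field; rewrite t0 t1.
Qed.

(* [(t - 1) t'' = -1] and [t' t'' = t' - 1] *)
Lemma pf_sum_mult'' f : pf_sum f -> pf_sum (f * t'').
Proof.
move=> [P [Q [R ->]]].
exists (- (P %/ ('X - 1%:P))), (('X - 1) * (Q %/ ('X - 0%:P))), ('X * (R + (P.[1] + Q.[0])%:P)).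
rewrite {1}(evF_divXsubC phi t 1 P) {1}(evF_divXsubC phi t' 0 Q) !evFE rmorphD.
by have t0 := t_neq0; have t1 := subr1t_neq0; field; rewrite t0 t1.
Qed.

Lemma inAF_pf_sum f : inAF f -> pf_sum f.
Proof.
move=> [p [a [b ->]]]; rewrite invfM mulrA.
elim: b => [|b IHb]; last by rewrite exprSr invfM mulrA; apply: pf_sum_mult''.
rewrite expr0 invr1 mulr1; elim: a => [|a IHa].
  by rewrite expr0 invr1 mulr1; exists p, 0, 0; rewrite !evF0 !addr0.
by rewrite exprSr invfM mulrA; apply: pf_sum_divt.
Qed.

Lemma evF_clear_denominator s D N : s * ev D t = ev N t ->
  (size D <= 2)%N -> (size N <= 2)%N ->
  forall p, exists n (H : {poly k}), (size H <= n.+1)%N /\ ev p s * ev D t ^+ n = ev H t.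
Proof.
move=> sDN sD sN; elim/poly_ind => [|p c [n [H [sH EH]]]].
  by exists 0%N, 0; rewrite size_poly0 !evF0 mul0r.
exists n.+1, (H * N + c%:P * D ^+ n.+1); split.
  apply: leq_trans (size_polyD _ _) _; rewrite geq_max; apply/andP; split.
    by have := size_polyMleq H N; lia.
  rewrite mul_polyC; apply: leq_trans (size_scale_leq _ _) _.
  by apply: leq_trans (size_poly_exp_leq _ _) _; nia.
by rewrite !evFE -EH -sDN exprS; ring.
Qed.

Lemma dvdp_size_scale (d p : {poly k}) :
  d %| p -> (size p <= size d)%N -> exists c, p = c *: d.
Proof.
have [->|p_nz] := eqVneq p 0; first by exists 0; rewrite scale0r.
move=> dvd_dp le_pd; have : d %= p by rewrite -dvdp_size_eqp // eqn_leq le_pd dvdp_leq.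
by rewrite eqp_sym => /eqpf_eq [c _ ->]; exists c.
Qed.

Lemma coprimep_relation_scale (A B P Q R : {poly k}) : coprimep A B ->
  P * A * B + Q * B + R * A = 0 -> (size Q <= size A)%N -> exists c, Q = c *: A.
Proof.
move=> cAB rel sQ; apply: dvdp_size_scale sQ; rewrite -(Gauss_dvdpl _ cAB).
have -> : Q * B = - (P * B + R) * A by apply/eqP; rewrite -subr_eq0 -rel; apply/eqP; ring.
exact: dvdp_mull.
Qed.

(* Clearing the denominators t^m and (t - 1)^n of the t'- and t''-parts yields a polynomial
   identity in which X^m must divide the cleared t'-part, whose degree is at most m. *)
Lemma pf_sum_rigid P Q R : ev P t + ev Q t' + ev R t'' = 0 ->
  [/\ exists c, ev P t = phi c, exists c, ev Q t' = phi c & exists c, ev R t'' = phi c].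
Proof.
move=> sum0; have t0 := t_neq0; have t1 := subr1t_neq0.
have EP : ev P t = - (ev Q t' + ev R t'') by apply/eqP; rewrite -addr_eq0 addrA sum0.
have [m [H2 [sH2 EH2]]] : exists m (H2 : {poly k}),
    (size H2 <= m.+1)%N /\ ev Q t' * t ^+ m = ev H2 t.
  have := @evF_clear_denominator t' 'X ('X - 1%:P); rewrite !evFE; apply=> //.
  - by field; rewrite t0.
  - by rewrite size_polyX.
  - by rewrite size_XsubC.
have [n [H3 [sH3 EH3]]] : exists n (H3 : {poly k}),
    (size H3 <= n.+1)%N /\ ev R t'' * (t - 1) ^+ n = ev H3 t.
  have := @evF_clear_denominator t'' ('X - 1%:P) (- 1%:P); rewrite !evFE; apply=> //.
  - by field; rewrite t1.
  - by rewrite size_XsubC.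
  - by rewrite size_polyN size_polyC oner_neq0.
have cop : coprimep ('X^m : {poly k}) (('X - 1%:P) ^+ n).
  apply/coprimep_expl/coprimep_expr.
  by rewrite coprimep_sym coprimepX root_XsubC eq_sym oner_eq0.
have rel : P * 'X^m * ('X - 1%:P) ^+ n + H2 * ('X - 1%:P) ^+ n + H3 * 'X^m = 0.
  apply: (evF_eq0 tr_t); rewrite !evFE -EH2 -EH3.
  by rewrite EP; ring.
have [c2 e2] : exists c, H2 = c *: 'X^m.
  by apply: coprimep_relation_scale cop rel _; rewrite size_polyXn.
have [c3 e3] : exists c, H3 = c *: ('X - 1%:P) ^+ n.
  apply: (coprimep_relation_scale (B := 'X^m) (P := P) (R := H2)).
  - by rewrite coprimep_sym.
  - by rewrite -rel; ring.
  - by rewrite size_exp_XsubC.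
have EQ : ev Q t' = phi c2.
  by apply: (mulIf (expf_neq0 m t0)); rewrite EH2 e2 evFZ !evFE.
have ER : ev R t'' = phi c3.
  have t1' : t - 1 != 0 by rewrite -opprB oppr_eq0.
  by apply: (mulIf (expf_neq0 n t1')); rewrite EH3 e3 evFZ !evFE.
split; [exists (- (c2 + c3)) | by exists c2 | by exists c3].
by rewrite rmorphN rmorphD -EQ -ER.
Qed.

Lemma pf_sum_rigid_rot P Q R : ev P t' + ev Q t'' + ev R t = 0 ->
  (exists c, ev P t' = phi c) /\ (exists c, ev Q t'' = phi c).
Proof. by rewrite addrC addrA => /pf_sum_rigid [_ ? ?]. Qed.

Lemma pf_sum_rigid_rot2 P Q R : ev P t'' + ev Q t + ev R t' = 0 ->
  (exists c, ev P t'' = phi c) /\ (exists c, ev Q t = phi c).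
Proof. by rewrite -addrA addrC => /pf_sum_rigid [? _ ?]. Qed.

Lemma inAF_decomp0 f : inAF f ->
  exists P Q R, f = (t - 1) * ev P t + t' * ev Q t' + ev R t''.
Proof.
move=> /inAF_pf_sum [P [Q [R ->]]].
have [P' [Q' [R' E]]] := evF_sum_shift phi t t' t'' 1 0 P Q R.
by exists P', Q', R'; rewrite E rmorph1 rmorph0 subr0.
Qed.

Lemma inAF_decomp1 f : inAF f ->
  exists P Q R, f = ev P t + (t' - 1) * ev Q t' + t'' * ev R t''.
Proof.
move=> /inAF_pf_sum [P [Q [R ->]]].
have [Q' [R' [P' E]]] := evF_sum_shift phi t' t'' t 1 0 Q R P.
exists P', Q', R'; rewrite -addrA addrC E rmorph1 rmorph0 subr0.
by rewrite addrC addrA.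
Qed.

Lemma inAF_decomp2 f : inAF f ->
  exists P Q R, f = t * ev P t + ev Q t' + (t'' - 1) * ev R t''.
Proof.
move=> /inAF_pf_sum [P [Q [R ->]]].
have [R' [P' [Q' E]]] := evF_sum_shift phi t'' t t' 1 0 R P Q.
exists P', Q', R'; rewrite addrC addrA E rmorph1 rmorph0 subr0.
by rewrite -addrA addrC.
Qed.

Lemma decomp0_eq0 P Q R : (t - 1) * ev P t + t' * ev Q t' + ev R t'' = 0 ->
  [/\ (t - 1) * ev P t = 0, t' * ev Q t' = 0 & ev R t'' = 0].
Proof.
have := @evF_sum_shift_eq0 _ _ phi t t' t'' 1 0 tr_t t'_transcendental.
rewrite rmorph1 rmorph0 subr0; apply=> P' Q' R' /pf_sum_rigid [? ? _]; by split.
Qed.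

Lemma decomp1_eq0 P Q R : ev P t + (t' - 1) * ev Q t' + t'' * ev R t'' = 0 ->
  [/\ ev P t = 0, (t' - 1) * ev Q t' = 0 & t'' * ev R t'' = 0].
Proof.
have := @evF_sum_shift_eq0 _ _ phi t' t'' t 1 0 t'_transcendental t''_transcendental
  pf_sum_rigid_rot Q R P.
rewrite rmorph1 rmorph0 subr0 => shift_eq0.
by rewrite -addrA addrC => /shift_eq0 [? ? ?]; split.
Qed.

Lemma decomp2_eq0 P Q R : t * ev P t + ev Q t' + (t'' - 1) * ev R t'' = 0 ->
  [/\ t * ev P t = 0, ev Q t' = 0 & (t'' - 1) * ev R t'' = 0].
Proof.
have := @evF_sum_shift_eq0 _ _ phi t'' t t' 1 0 t''_transcendental tr_t
  pf_sum_rigid_rot2 R P Q.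
rewrite rmorph1 rmorph0 subr0 => shift_eq0.
by rewrite addrC addrA => /shift_eq0 [? ? ?]; split.
Qed.

End PartialFractions.

Lemma lin_comb3DZ (R : pzRingType) (V : lmodType R) (a b c : V) (l x y z x' y' z' : R) :
  l *: (x *: a + y *: b + z *: c) + (x' *: a + y' *: b + z' *: c) =
  (l * x + x') *: a + (l * y + y') *: b + (l * z + z') *: c.
Proof.
rewrite !scalerDr !scalerA !scalerDl addrACA.
by congr (_ + _); apply: addrACA.
Qed.

Section Sl2.
Variable F : fieldType.
Implicit Types (a b c d l x y z : F) (M N : 'M[F]_2).

Definition mx2F a b c d : 'M[F]_2 :=
  \matrix_(i < 2, j < 2)
    (if (i : nat) == 0%N then (if (j : nat) == 0%N then a else b)
     else (if (j : nat) == 0%N then c else d)).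

Definition xmF := mx2F (-1) 2%:R 0 1.
Definition ymF := mx2F (-1) 0 (- 2%:R) 1.
Definition zmF := mx2F 1 0 0 (-1).
Definition lie_brF M N := M *m N - N *m M.

Lemma mx2F_entries M : M = mx2F (M 0 0) (M 0 1) (M 1 0) (M 1 1).
Proof.
apply/matrixP => i j; rewrite !mxE.
by case: i => [[|[|//]] ?]; case: j => [[|[|//]] ?]; congr (M _ _); apply: val_inj.
Qed.

Lemma mxtrace_mx2F a b c d : \tr (mx2F a b c d) = a + d.
Proof. by rewrite /mxtrace !big_ord_recl big_ord0 !mxE /= addr0. Qed.

Lemma lie_brF_mx2F a b c d (a' b' c' d' : F) :
  lie_brF (mx2F a b c d) (mx2F a' b' c' d') =
  mx2F (b * c' - b' * c) (a * b' + b * d' - (a' * b + b' * d))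
       (c * a' + d * c' - (c' * a + d' * c)) (c * b' - c' * b).
Proof.
apply/matrixP => i j; rewrite /lie_brF !mxE !big_ord_recl !big_ord0 !mxE /=.
by case: i => [[|[|//]] ?]; case: j => [[|[|//]] ?] /=; ring.
Qed.

Variable t : F.
Hypotheses (h2 : (2%:R : F) != 0) (t0 : t != 0) (t1 : 1 - t != 0).
Local Notation t' := (1 - t^-1).
Local Notation t'' := ((1 - t)^-1).

Definition u0F := (4%:R)^-1 *: (zmF + t'' *: xmF + (t'' - 1) *: ymF).
Definition u1F := (4%:R)^-1 *: (xmF + t *: ymF + (t - 1) *: zmF).
Definition u2F := (4%:R)^-1 *: (ymF + t' *: zmF + (t' - 1) *: xmF).

Definition ucomb x y z := x *: u0F + y *: u1F + z *: u2F.

Let h4 : (4%:R : F) != 0.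
Proof. by rewrite (_ : 4%:R = 2%:R * 2%:R :> F) ?mulf_neq0 // -natrM. Qed.

Lemma ucomb_mx2F x y z : ucomb x y z =
  mx2F ((x * (1 - t'') - y) / 2%:R) ((x * t'' + y - z / t) / 2%:R)
       ((x * (1 - t'') - y * t - z) / 2%:R) ((x * (t'' - 1) + y) / 2%:R).
Proof.
apply/matrixP => i j; rewrite /ucomb /u0F /u1F /u2F /xmF /ymF /zmF !mxE.
by case: i => [[|[|//]] ?]; case: j => [[|[|//]] ?] /=; field; rewrite ?h2 ?h4 ?t0 ?t1.
Qed.

Lemma ucombDZ (l : F) x y z (x' y' z' : F) :
  l *: ucomb x y z + ucomb x' y' z' = ucomb (l * x + x') (l * y + y') (l * z + z').
Proof. exact: lin_comb3DZ. Qed.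

Lemma mxtrace_ucomb x y z : \tr (ucomb x y z) = 0.
Proof. by rewrite ucomb_mx2F mxtrace_mx2F; field; rewrite h2 t1. Qed.

Definition ucoord0 M := M 0 1 + 2%:R * M 0 0 - M 1 0 / t.
Definition ucoord1 M := ucoord0 M * (1 - t'') - 2%:R * M 0 0.
Definition ucoord2 M := - ucoord0 M * t + 2%:R * t * M 0 0 - 2%:R * M 1 0.

Lemma ucoord_ucomb x y z :
  [/\ ucoord0 (ucomb x y z) = x, ucoord1 (ucomb x y z) = y & ucoord2 (ucomb x y z) = z].
Proof.
rewrite /ucoord1 /ucoord2 /ucoord0 ucomb_mx2F !mxE /=.
by split; field; rewrite ?h2 ?t0 ?t1.
Qed.

Lemma ucomb_ucoord M : \tr M = 0 -> M = ucomb (ucoord0 M) (ucoord1 M) (ucoord2 M).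
Proof.
move=> trM; have M11 : M 1 1 = - M 0 0.
  by apply/eqP; rewrite -addr_eq0 addrC -(mxtrace_mx2F _ (M 0 1) (M 1 0)) -mx2F_entries trM.
rewrite {1}[M]mx2F_entries ucomb_mx2F /ucoord1 /ucoord2 /ucoord0 M11.
by congr mx2F; field; rewrite ?h2 ?t0 ?t1.
Qed.

Lemma ucomb_eq0 x y z : ucomb x y z = 0 -> [/\ x = 0, y = 0 & z = 0].
Proof.
move=> E; have [ex ey ez] := ucoord_ucomb x y z; rewrite E in ex ey ez.
by rewrite -ex -ey -ez /ucoord1 /ucoord2 /ucoord0 !mxE; split; ring.
Qed.

Lemma lie_brF_ucomb x y z x' y' z' :
  lie_brF (ucomb x y z) (ucomb x' y' z') =
  ucomb (- t' * (y * z' - z * y')) (- t'' * (z * x' - x * z')) (- t * (x * y' - y * x')).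
Proof.
rewrite !ucomb_mx2F lie_brF_mx2F.
by congr mx2F; field; rewrite ?h2 ?t0 ?t1.
Qed.

(* Coordinates on Psi(Omega), Psi(Omega'), Psi(Omega''): the rotation u0 -> u1 -> u2,
   t -> t' -> t'' permutes the three, so their brackets have the same shape. *)
Definition omegaF x y z := ucomb ((t - 1) * x) y (t * z).
Definition omegaF' x y z := ucomb (t' * z) ((t' - 1) * x) y.
Definition omegaF'' x y z := ucomb y (t'' * z) ((t'' - 1) * x).

Lemma omegaFDZ l x y z x' y' z' :
  l *: omegaF x y z + omegaF x' y' z' = omegaF (l * x + x') (l * y + y') (l * z + z').
Proof. by rewrite /omegaF ucombDZ; congr ucomb; ring. Qed.

Lemma omegaF'DZ l x y z x' y' z' :
  l *: omegaF' x y z + omegaF' x' y' z' = omegaF' (l * x + x') (l * y + y') (l * z + z').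
Proof. by rewrite /omegaF' ucombDZ; congr ucomb; ring. Qed.

Lemma omegaF''DZ l x y z x' y' z' :
  l *: omegaF'' x y z + omegaF'' x' y' z' = omegaF'' (l * x + x') (l * y + y') (l * z + z').
Proof. by rewrite /omegaF'' ucombDZ; congr ucomb; ring. Qed.

Lemma lie_brF_omegaF x y z x' y' z' :
  lie_brF (omegaF x y z) (omegaF x' y' z') =
  omegaF (- (y * z' - z * y')) (t * (z * x' - x * z')) ((1 - t) * (x * y' - y * x')).
Proof. by rewrite lie_brF_ucomb; congr ucomb; field; rewrite ?t0 ?t1. Qed.

Lemma lie_brF_omegaF' x y z x' y' z' :
  lie_brF (omegaF' x y z) (omegaF' x' y' z') =
  omegaF' (- (y * z' - z * y')) (t' * (z * x' - x * z')) ((1 - t') * (x * y' - y * x')).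
Proof. by rewrite lie_brF_ucomb; congr ucomb; field; rewrite ?t0 ?t1. Qed.

Lemma lie_brF_omegaF'' x y z x' y' z' :
  lie_brF (omegaF'' x y z) (omegaF'' x' y' z') =
  omegaF'' (- (y * z' - z * y')) (t'' * (z * x' - x * z')) ((1 - t'') * (x * y' - y * x')).
Proof. by rewrite lie_brF_ucomb; congr ucomb; field; rewrite ?t0 ?t1. Qed.

Lemma xmF_omegaF : xmF = omegaF 0 2%:R (- 2%:R).
Proof. by rewrite /omegaF ucomb_mx2F /xmF; congr mx2F; field; rewrite ?h2 ?t0 ?t1. Qed.

Lemma omegaF_gen2 : t *: ymF + (t - 1) *: zmF = omegaF 0 2%:R 2%:R.
Proof.
apply/matrixP => i j; rewrite /omegaF ucomb_mx2F /ymF /zmF !mxE.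
by case: i => [[|[|//]] ?]; case: j => [[|[|//]] ?] /=; field; rewrite ?h2 ?t0 ?t1.
Qed.

Lemma ymF_omegaF' : ymF = omegaF' 0 2%:R (- 2%:R).
Proof. by rewrite /omegaF' ucomb_mx2F /ymF; congr mx2F; field; rewrite ?h2 ?t0 ?t1. Qed.

Lemma omegaF'_gen2 : t' *: zmF + (t' - 1) *: xmF = omegaF' 0 2%:R 2%:R.
Proof.
apply/matrixP => i j; rewrite /omegaF' ucomb_mx2F /xmF /zmF !mxE.
by case: i => [[|[|//]] ?]; case: j => [[|[|//]] ?] /=; field; rewrite ?h2 ?t0 ?t1.
Qed.

Lemma zmF_omegaF'' : zmF = omegaF'' 0 2%:R (- 2%:R).
Proof. by rewrite /omegaF'' ucomb_mx2F /zmF; congr mx2F; field; rewrite ?h2 ?t0 ?t1. Qed.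

Lemma omegaF''_gen2 : t'' *: xmF + (t'' - 1) *: ymF = omegaF'' 0 2%:R 2%:R.
Proof.
apply/matrixP => i j; rewrite /omegaF'' ucomb_mx2F /xmF /ymF !mxE.
by case: i => [[|[|//]] ?]; case: j => [[|[|//]] ?] /=; field; rewrite ?h2 ?t0 ?t1.
Qed.

End Sl2.

Section LieGen.
Variables (K : pzRingType) (V : lmodType K) (br : V -> V -> V) (S : V -> Prop).

Lemma lie_gen_base v : S v -> lie_gen br S v.
Proof. by move=> Sv P SP _ _ _; apply: SP. Qed.

Lemma lie_gen0 : lie_gen br S 0.
Proof. by move=> P _ P0. Qed.

Lemma lie_genDZ a u v : lie_gen br S u -> lie_gen br S v -> lie_gen br S (a *: u + v).
Proof.
move=> Su Sv P SP P0 PDZ Pbr.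
exact: (PDZ _ _ _ (Su P SP P0 PDZ Pbr) (Sv P SP P0 PDZ Pbr)).
Qed.

Lemma lie_gen_br u v : lie_gen br S u -> lie_gen br S v -> lie_gen br S (br u v).
Proof.
move=> Su Sv P SP P0 PDZ Pbr.
exact: (Pbr _ _ (Su P SP P0 PDZ Pbr) (Sv P SP P0 PDZ Pbr)).
Qed.

End LieGen.

Section LieImage.
Variables (k F : fieldType) (phi : {rmorphism k -> F}).
Hypothesis hk : (2%:R : k) != 0.
Variables (L : lmodType k) (br : L -> L -> L) (psi : L -> 'M[F]_2).
Hypothesis psi_lin : forall (a : k) u v, psi (a *: u + v) = phi a *: psi u + psi v.
Hypothesis psi_br : forall u v, psi (br u v) = lie_brF (psi u) (psi v).

Definition psi_image (S : L -> Prop) M := exists v, lie_gen br S v /\ M = psi v.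

Lemma psi0 : psi 0 = 0.
Proof.
have := psi_lin 1 0 0; rewrite scaler0 addr0 rmorph1 scale1r => E.
by apply: (addrI (psi 0)); rewrite -E addr0.
Qed.

Section Closure.
Variable S : L -> Prop.
Local Notation image := (psi_image S).

Lemma psi_image_base v : S v -> image (psi v).
Proof. by exists v; split => //; apply: lie_gen_base. Qed.

Lemma psi_image0 : image 0.
Proof. by exists 0; rewrite psi0; split => //; apply: lie_gen0. Qed.

Lemma psi_imageDZ a M N : image M -> image N -> image (phi a *: M + N).
Proof.
move=> [u [Su ->]] [v [Sv ->]]; exists (a *: u + v).
by rewrite psi_lin; split=> //; apply: lie_genDZ.
Qed.

Lemma psi_imageZ a M : image M -> image (phi a *: M).
Proof. by move=> SM; rewrite -[_ *: M]addr0; apply: psi_imageDZ SM psi_image0. Qed.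

Lemma psi_imageD M N : image M -> image N -> image (M + N).
Proof. by move=> SM SN; rewrite -[M]scale1r -(rmorph1 phi); apply: psi_imageDZ. Qed.

Lemma psi_image_br M N : image M -> image N -> image (lie_brF M N).
Proof.
move=> [u [Su ->]] [v [Sv ->]]; exists (br u v).
by rewrite psi_br; split=> //; apply: lie_gen_br.
Qed.

Lemma psi_image_ind (P : 'M[F]_2 -> Prop) :
  (forall v, S v -> P (psi v)) -> P 0 ->
  (forall a M N, P M -> P N -> P (phi a *: M + N)) ->
  (forall M N, P M -> P N -> P (lie_brF M N)) -> forall M, image M -> P M.
Proof.
move=> PS P0 PDZ Pbr M [v [Sv ->]].
apply: (Sv (fun v => P (psi v))) => //; first by rewrite psi0.
- by move=> a u w Pu Pw; rewrite psi_lin; apply: PDZ.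
- by move=> u w Pu Pw; rewrite psi_br; apply: Pbr.
Qed.

End Closure.

Variables (C : F -> F -> F -> 'M[F]_2) (s : F).
Hypothesis C_DZ : forall l x y z x' y' z',
  l *: C x y z + C x' y' z' = C (l * x + x') (l * y + y') (l * z + z').
Hypothesis C_br : forall x y z x' y' z',
  lie_brF (C x y z) (C x' y' z') =
  C (- (y * z' - z * y')) (s * (z * x' - x * z')) ((1 - s) * (x * y' - y * x')).
Variables (g1 g2 : L).
Hypotheses (psi_g1 : psi g1 = C 0 2%:R (- 2%:R)) (psi_g2 : psi g2 = C 0 2%:R 2%:R).
Local Notation image := (psi_image (fun w => w = g1 \/ w = g2)).

Let C0 : C 0 0 0 = 0.
Proof.
by apply: (addIr (C 0 0 0)); rewrite add0r -{1}[C 0 0 0]scale1r C_DZ !mulr0 !addr0.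
Qed.

Let CZ l x y z : l *: C x y z = C (l * x) (l * y) (l * z).
Proof. by have := C_DZ l x y z 0 0 0; rewrite C0 !addr0. Qed.

Let CD x y z x' y' z' : C x y z + C x' y' z' = C (x + x') (y + y') (z + z').
Proof. by have := C_DZ 1 x y z x' y' z'; rewrite scale1r !mul1r. Qed.

Lemma psi_image_sub_coords M : image M ->
  exists p q r, M = C (evF phi p s) (evF phi q s) (evF phi r s).
Proof.
move: M; apply: psi_image_ind.
- move=> v [->|->]; [rewrite psi_g1 | rewrite psi_g2].
  + by exists 0, 2%:R%:P, (- 2%:R)%:P; rewrite !evFE rmorphN rmorph_nat.
  + by exists 0, 2%:R%:P, 2%:R%:P; rewrite !evFE rmorph_nat.
- by exists 0, 0, 0; rewrite !evFE C0.
- move=> a _ _ [p [q [r ->]]] [p' [q' [r' ->]]].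
  exists (a%:P * p + p'), (a%:P * q + q'), (a%:P * r + r').
  by rewrite C_DZ !evFE.
- move=> _ _ [p [q [r ->]]] [p' [q' [r' ->]]].
  exists (- (q * r' - r * q')), ('X * (r * p' - p * r')), ((1 - 'X) * (p * q' - q * p')).
  by rewrite C_br !evFE.
Qed.

Let phi2 : phi 2%:R = 2%:R. Proof. exact: rmorph_nat. Qed.

Let h2F : (2%:R : F) != 0.
Proof. by rewrite -phi2 fmorph_eq0. Qed.

Let image_gens : image (C 0 2%:R (- 2%:R)) /\ image (C 0 2%:R 2%:R).
Proof.
by split; [rewrite -psi_g1 | rewrite -psi_g2]; apply: psi_image_base; [left | right].
Qed.

Let image_C010 : image (C 0 1 0).
Proof.
have [g1S g2S] := image_gens; set a : k := 2%:R^-1 * 2%:R^-1.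
have := psi_imageD (psi_imageZ a g1S) (psi_imageZ a g2S).
by rewrite !CZ CD rmorphM fmorphV phi2; congr (image (C _ _ _)); field.
Qed.

Let image_C001 : image (C 0 0 1).
Proof.
have [g1S g2S] := image_gens; set a : k := 2%:R^-1 * 2%:R^-1.
have := psi_imageD (psi_imageZ (- a) g1S) (psi_imageZ a g2S).
by rewrite !CZ CD rmorphN rmorphM fmorphV phi2; congr (image (C _ _ _)); field.
Qed.

Let image_C100 : image (C 1 0 0).
Proof.
have := psi_imageZ (-1) (psi_image_br image_C010 image_C001).
by rewrite C_br CZ rmorphN1; congr (image (C _ _ _)); ring.
Qed.

Let image_axes f := [/\ image (C f 0 0), image (C 0 f 0) & image (C 0 0 f)].

Let image_axesDZ a f g : image_axes f -> image_axes g -> image_axes (phi a * f + g).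
Proof.
move=> [f1 f2 f3] [g1' g2' g3']; split.
- by have := psi_imageDZ a f1 g1'; rewrite C_DZ !mulr0 !addr0.
- by have := psi_imageDZ a f2 g2'; rewrite C_DZ !mulr0 !addr0.
- by have := psi_imageDZ a f3 g3'; rewrite C_DZ !mulr0 !addr0.
Qed.

(* Bracketing with [C 0 0 1] and [C 0 1 0] multiplies a coordinate by [s] or [1 - s]. *)
Let image_axesM f : image_axes f -> image_axes (s * f).
Proof.
move=> [f1 f2 f3].
have f2' : image (C 0 (s * f) 0).
  by have := psi_image_br image_C001 f1; rewrite C_br; congr (image (C _ _ _)); ring.
split=> //.
- have := psi_imageZ (-1) (psi_image_br f2' image_C001).
  by rewrite C_br CZ rmorphN1; congr (image (C _ _ _)); ring.
- have := psi_imageD (psi_imageZ (-1) (psi_image_br f1 image_C010)) f3.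
  by rewrite C_br CZ CD rmorphN1; congr (image (C _ _ _)); ring.
Qed.

Let image_axes_evF p : image_axes (evF phi p s).
Proof.
have axes0 : image_axes 0 by split; rewrite C0; apply: psi_image0.
have axes1 : image_axes 1 by split; [apply: image_C100 | apply: image_C010 | apply: image_C001].
elim/poly_ind: p => [|p c IH]; first by rewrite evF0.
have := image_axesDZ 1 (image_axesM IH) (image_axesDZ c axes1 axes0).
by rewrite !evFE mul1r mulr1 addr0 mulrC.
Qed.

Lemma psi_image_coords M :
  image M <-> exists p q r, M = C (evF phi p s) (evF phi q s) (evF phi r s).
Proof.
split; first exact: psi_image_sub_coords.
move=> [p [q [r ->]]].
have [Pp _ _] := image_axes_evF p; have [_ Pq _] := image_axes_evF q.
have [_ _ Pr] := image_axes_evF r.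
by have := psi_imageD (psi_imageD Pp Pq) Pr; rewrite !CD !addr0 !add0r.
Qed.

End LieImage.

Section Decomposition.
Variables (k F : fieldType) (phi : {rmorphism k -> F}) (t : F).
Hypotheses (tr_t : ~ algebraicOver phi t) (h2 : (2%:R : F) != 0).
Local Notation ev := (evF phi).
Local Notation t' := (1 - t^-1).
Local Notation t'' := ((1 - t)^-1).
Local Notation inAF := (inAF phi t).
Local Notation ucomb := (ucomb t).
Implicit Types (s x y z : F) (M : 'M[F]_2) (p q r : {poly k}).
Let t0 := t_neq0 tr_t.
Let t1 := subr1t_neq0 tr_t.

Lemma ucombD x y z x' y' z' :
  ucomb x y z + ucomb x' y' z' = ucomb (x + x') (y + y') (z + z').
Proof. by rewrite -[ucomb x y z]scale1r ucombDZ !mul1r. Qed.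

Lemma ucomb000 : ucomb 0 0 0 = 0.
Proof. by rewrite /ucomb !scale0r !addr0. Qed.

Lemma ucomb_direct x y z : ucomb x y z = 0 ->
  [/\ x *: u0F t = 0, y *: u1F t = 0 & z *: u2F t = 0].
Proof. by move/(ucomb_eq0 h2 t0 t1) => [-> -> ->]; rewrite !scale0r. Qed.

Lemma inAF_1 : inAF 1.
Proof. by rewrite -(rmorph1 phi); apply: inAF_phi. Qed.

Lemma inAF_t : inAF t.
Proof. by have := inAF_ev phi t 'X; rewrite evFX. Qed.

Lemma inAF_2V : inAF 2%:R^-1.
Proof. by rewrite -(rmorph_nat phi) -fmorphV; apply: inAF_phi. Qed.

Lemma inAF_2 : inAF 2%:R.
Proof. by rewrite -(rmorph_nat phi); apply: inAF_phi. Qed.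

Local Ltac inAF_closure := repeat first
  [ assumption | apply: inAF_1 | apply: inAF_t | apply: inAF_2 | apply: inAF_2V
  | apply: inAF_tV | apply: inAF_t'' | apply: inAF_add | apply: inAF_opp | apply: inAF_mul ].

Definition inGF (M : 'M[F]_2) := \tr M = 0 /\ forall i j, inAF (M i j).

Lemma inGF_ucomb x y z : inAF x -> inAF y -> inAF z -> inGF (ucomb x y z).
Proof.
move=> Ax Ay Az; split; first exact: mxtrace_ucomb.
rewrite ucomb_mx2F // => i j; rewrite mxE.
by case: ifP => _; case: ifP => _; inAF_closure.
Qed.

Lemma ucoord_inAF (M : 'M[F]_2) : (forall i j, inAF (M i j)) ->
  [/\ inAF (ucoord0 t M), inAF (ucoord1 t M) & inAF (ucoord2 t M)].
Proof.
move=> AM; have A00 := AM 0 0; have A01 := AM 0 1; have A10 := AM 1 0.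
by rewrite /ucoord1 /ucoord2 /ucoord0; split; inAF_closure.
Qed.

Definition sum3F (f0 f1 f2 : F) s M :=
  exists p q r, M = ucomb (f0 * ev p s) (f1 * ev q s) (f2 * ev r s).

Local Notation Omega := (sum3F (t - 1) 1 t t).
Local Notation Omega' := (sum3F t' (t' - 1) 1 t').
Local Notation Omega'' := (sum3F 1 t'' (t'' - 1) t'').

Lemma omegaF_sum3F M :
  (exists p q r, M = omegaF t (ev p t) (ev q t) (ev r t)) <-> Omega M.
Proof. by split=> -[p [q [r ->]]]; exists p, q, r; rewrite /omegaF mul1r. Qed.

Lemma omegaF'_sum3F M :
  (exists p q r, M = omegaF' t (ev p t') (ev q t') (ev r t')) <-> Omega' M.
Proof.
by split=> -[p [q [r ->]]]; [exists r, p, q | exists q, r, p]; rewrite /omegaF' mul1r.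
Qed.

Lemma omegaF''_sum3F M :
  (exists p q r, M = omegaF'' t (ev p t'') (ev q t'') (ev r t'')) <-> Omega'' M.
Proof.
by split=> -[p [q [r ->]]]; [exists q, r, p | exists r, p, q]; rewrite /omegaF'' mul1r.
Qed.

Lemma inGF_sum3F (f0 f1 f2 : F) s M : inAF f0 -> inAF f1 -> inAF f2 -> inAF s ->
  sum3F f0 f1 f2 s M -> inGF M.
Proof.
move=> A0 A1 A2 As [p [q [r ->]]].
have [Ap Aq Ar] := And3 (inAF_evF tr_t p As) (inAF_evF tr_t q As) (inAF_evF tr_t r As).
by apply: inGF_ucomb; inAF_closure.
Qed.

Lemma inGF_Omega_sum M :
  inGF M <-> exists a b c, [/\ Omega a, Omega' b, Omega'' c & M = a + b + c].
Proof.
split=> [[trM AM] | [a [b [c [Oa Ob Oc ->]]]]]; last first.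
  have At' := inAF_t' tr_t; have At'' : inAF t'' := inAF_t'' _ _.
  have [[tra Aa] [trb Ab] [trc Ac]] : [/\ inGF a, inGF b & inGF c].
    by split; [apply: inGF_sum3F Oa | apply: inGF_sum3F Ob | apply: inGF_sum3F Oc];
      inAF_closure.
  split; first by rewrite !mxtraceD tra trb trc !addr0.
  by move=> i j; rewrite !mxE; move: (Aa i j) (Ab i j) (Ac i j) => *; inAF_closure.
have [A0 A1 A2] := ucoord_inAF AM.
have [P0 [Q0 [R0 E0]]] := inAF_decomp0 tr_t A0.
have [P1 [Q1 [R1 E1]]] := inAF_decomp1 tr_t A1.
have [P2 [Q2 [R2 E2]]] := inAF_decomp2 tr_t A2.
exists (ucomb ((t - 1) * ev P0 t) (1 * ev P1 t) (t * ev P2 t)),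
  (ucomb (t' * ev Q0 t') ((t' - 1) * ev Q1 t') (1 * ev Q2 t')),
  (ucomb (1 * ev R0 t'') (t'' * ev R1 t'') ((t'' - 1) * ev R2 t'')).
split; [by exists P0, P1, P2 | by exists Q0, Q1, Q2 | by exists R0, R1, R2 |].
by rewrite {1}(ucomb_ucoord h2 t0 t1 trM) !ucombD E0 E1 E2 !mul1r.
Qed.

Lemma Omega_sum_eq0 a b c : Omega a -> Omega' b -> Omega'' c ->
  a + b + c = 0 -> [/\ a = 0, b = 0 & c = 0].
Proof.
move=> [P0 [P1 [P2 ->]]] [Q0 [Q1 [Q2 ->]]] [R0 [R1 [R2 ->]]].
rewrite !ucombD !mul1r => /(ucomb_eq0 h2 t0 t1) [].
move=> /(decomp0_eq0 tr_t) [-> -> ->] /(decomp1_eq0 tr_t) [-> -> ->].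
by move=> /(decomp2_eq0 tr_t) [-> -> ->]; rewrite ucomb000.
Qed.

Lemma Omega_direct_sum (S S' S'' : 'M[F]_2 -> Prop) :
  (forall M, S M <-> Omega M) -> (forall M, S' M <-> Omega' M) ->
  (forall M, S'' M <-> Omega'' M) ->
  (forall M, inGF M <-> exists a b c, [/\ S a, S' b, S'' c & M = a + b + c]) /\
  (forall a b c, S a -> S' b -> S'' c -> a + b + c = 0 -> [/\ a = 0, b = 0 & c = 0]).
Proof.
move=> E E' E''; split=> [M | a b c /E Oa /E' Ob /E'' Oc]; last exact: Omega_sum_eq0.
apply: iff_trans (inGF_Omega_sum M) _.
split=> -[a [b [c [Oa Ob Oc ->]]]]; exists a, b, c.
  by split=> //; [apply/E | apply/E' | apply/E''].
by split=> //; [apply/E | apply/E' | apply/E''].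
Qed.

End Decomposition.

Section TetrahedronImages.
Variables (k F : fieldType) (phi : {rmorphism k -> F}) (t : F).
Hypotheses (hk : (2%:R : k) != 0) (tr_t : ~ algebraicOver phi t).
Variables (L : lmodType k) (br : L -> L -> L) (psi : L -> 'M[F]_2).
Hypothesis psi_lin : forall (a : k) u v, psi (a *: u + v) = phi a *: psi u + psi v.
Hypothesis psi_br : forall u v, psi (br u v) = lie_brF (psi u) (psi v).
Local Notation t' := (1 - t^-1).
Local Notation t'' := ((1 - t)^-1).
Local Notation image g1 g2 := (psi_image br psi (fun w => w = g1 \/ w = g2)).
Let h2 : (2%:R : F) != 0. Proof. by rewrite -(rmorph_nat phi) fmorph_eq0. Qed.
Let t0 := t_neq0 tr_t.
Let t1 := subr1t_neq0 tr_t.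

Lemma psi_image_Omega g1 g2 :
  psi g1 = xmF F -> psi g2 = t *: ymF F + (t - 1) *: zmF F ->
  forall M, image g1 g2 M <-> sum3F phi t (t - 1) 1 t t M.
Proof.
move=> Hg1 Hg2 M.
have Cg1 : psi g1 = omegaF t 0 2%:R (- 2%:R) by rewrite Hg1 (xmF_omegaF h2 t0 t1).
have Cg2 : psi g2 = omegaF t 0 2%:R 2%:R by rewrite Hg2 (omegaF_gen2 h2 t0 t1).
have C_br := lie_brF_omegaF h2 t0 t1.
exact: iff_trans (psi_image_coords hk psi_lin psi_br (omegaFDZ t) C_br Cg1 Cg2 M)
                 (omegaF_sum3F phi t M).
Qed.

Lemma psi_image_Omega' g1 g2 :
  psi g1 = ymF F -> psi g2 = t' *: zmF F + (t' - 1) *: xmF F ->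
  forall M, image g1 g2 M <-> sum3F phi t t' (t' - 1) 1 t' M.
Proof.
move=> Hg1 Hg2 M.
have Cg1 : psi g1 = omegaF' t 0 2%:R (- 2%:R) by rewrite Hg1 (ymF_omegaF' h2 t0 t1).
have Cg2 : psi g2 = omegaF' t 0 2%:R 2%:R by rewrite Hg2 (omegaF'_gen2 h2 t0 t1).
have C_br := lie_brF_omegaF' h2 t0 t1.
exact: iff_trans (psi_image_coords hk psi_lin psi_br (omegaF'DZ t) C_br Cg1 Cg2 M)
                 (omegaF'_sum3F phi t M).
Qed.

Lemma psi_image_Omega'' g1 g2 :
  psi g1 = zmF F -> psi g2 = t'' *: xmF F + (t'' - 1) *: ymF F ->
  forall M, image g1 g2 M <-> sum3F phi t 1 t'' (t'' - 1) t'' M.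
Proof.
move=> Hg1 Hg2 M.
have Cg1 : psi g1 = omegaF'' t 0 2%:R (- 2%:R) by rewrite Hg1 (zmF_omegaF'' h2 t0 t1).
have Cg2 : psi g2 = omegaF'' t 0 2%:R 2%:R by rewrite Hg2 (omegaF''_gen2 h2 t0 t1).
have C_br := lie_brF_omegaF'' h2 t0 t1.
exact: iff_trans (psi_image_coords hk psi_lin psi_br (omegaF''DZ t) C_br Cg1 Cg2 M)
                 (omegaF''_sum3F phi t M).
Qed.

End TetrahedronImages.

HB.instance Definition _ (k : fieldType) :=
  GRing.RMorphism.copy (@kF k) (@tofrac _ \o polyC).

Section RationalFunctionField.
Variable k : fieldType.

Lemma evF_tt p : evF (@kF k) p (tt k) = tofrac p.
Proof.
elim/poly_ind: p => [|p c IH]; first by rewrite evF0 rmorph0.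
by rewrite !evFE IH rmorphD rmorphM.
Qed.

Lemma tt_transcendental : ~ algebraicOver (@kF k) (tt k).
Proof.
case=> p p_nz /rootP pt0; move: p_nz.
by move: pt0; rewrite -[_.[_]]/(evF _ p _) evF_tt => /eqP; rewrite tofrac_eq0 => ->.
Qed.

Lemma inA_inAF f : inA f <-> inAF (@kF k) (tt k) f.
Proof. by split=> -[p [a [b ->]]]; exists p, a, b; rewrite evF_tt. Qed.

Lemma inG_inGF M : inG M <-> inGF (@kF k) (tt k) M.
Proof. by split=> -[trM AM]; split=> // i j; apply/inA_inAF. Qed.

End RationalFunctionField.

Unset Implicit Arguments.

Theorem proposition1p6 (k : fieldType) (hk : (2%:R : k) != 0)
  (L : lmodType k) (br : L -> L -> L) (X : 'I_4 -> 'I_4 -> L)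
  (psi : L -> 'M[kt k]_2) :
  is_lie_bracket br ->
  tetra_relations br X ->
  (forall v, lie_gen br (fun w => exists i j, i != j /\ w = X i j) v) ->
  (forall (a : k) u v, psi (a *: u + v) = kF a *: psi u + psi v) ->
  (forall u v, psi (br u v) = lie_br (psi u) (psi v)) ->
  psi (X i1 i2) = xm k ->
  psi (X i2 i3) = ym k ->
  psi (X i3 i1) = zm k ->
  psi (X i0 i3) = tt k *: ym k + (tt k - 1) *: zm k ->
  psi (X i0 i1) = tt' k *: zm k + (tt' k - 1) *: xm k ->
  psi (X i0 i2) = tt'' k *: xm k + (tt'' k - 1) *: ym k ->
  let PsiOmega   := fun M => exists v, lie_gen br (fun w => w = X i1 i2 \/ w = X i0 i3) v /\ M = psi v in
  let PsiOmega'  := fun M => exists v, lie_gen br (fun w => w = X i2 i3 \/ w = X i0 i1) v /\ M = psi v in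
  let PsiOmega'' := fun M => exists v, lie_gen br (fun w => w = X i3 i1 \/ w = X i0 i2) v /\ M = psi v in
  [/\ is_direct_sum3 PsiOmega   (tt k - 1) 1 (tt k) (tt k),
      is_direct_sum3 PsiOmega'  (tt' k) (tt' k - 1) 1 (tt' k),
      is_direct_sum3 PsiOmega'' 1 (tt'' k) (tt'' k - 1) (tt'' k) &
      g_direct_sum PsiOmega PsiOmega' PsiOmega''].
Proof.
move=> _ _ _ psi_lin psi_br H12 H23 H31 H03 H01 H02 PsiOmega PsiOmega' PsiOmega''.
have tr := @tt_transcendental k.
have h2 : (2%:R : kt k) != 0 by rewrite -(rmorph_nat (@kF k)) fmorph_eq0.
have direct (f0 f1 f2 s : kt k) : direct3 f0 f1 f2 s.
  by move=> p q r; exact: (ucomb_direct tr h2).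
have EO := psi_image_Omega hk tr psi_lin psi_br H12 H03.
have EO' := psi_image_Omega' hk tr psi_lin psi_br H23 H01.
have EO'' := psi_image_Omega'' hk tr psi_lin psi_br H31 H02.
have [G1 G2] := Omega_direct_sum tr h2 EO EO' EO''.
split; [exact: (conj EO (direct _ _ _ _)) | exact: (conj EO' (direct _ _ _ _)) |
        exact: (conj EO'' (direct _ _ _ _)) | split; last exact: G2].
by move=> M; apply: iff_trans (inG_inGF M) (G1 M).
Qed.
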